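(* Let $X_1,\dots,X_n,T$ be independent random variables with common finite support $(l,r)$, where $X_1,\dots,X_n$ are i.i.d. with common CDF $F$ (distributed as $X$), and $T$ is uniformly distributed over $(l,r)$. Then $$R_{k,n}=\frac{1}{r-l}\sum_{j=k}^n\binom{n}{j}G_X(n-j,j),\qquad 0\le k\le n.$$
   Context: The reliability of the multi-component stress-strength system with strengths $X_1,\dots,X_n$ and stress $T$ (with CDF $F_T$), i.e. the probability that at least $k$ of the $X_i$ exceed $T$, is $R_{k,n}=\sum_{j=k}^n\binom{n}{j}\int_{-\infty}^{+\infty}[1-F(t)]^j[F(t)]^{n-j}\,dF_T(t)$, with $R_{0,n}=1$. The CIGF of $X$ is $G_X(\alpha,\beta)=\int_l^r [F(x)]^\alpha[1-F(x)]^\beta\,dx$ where $l=\inf\{x:F(x)>0\}$, $r=\sup\{x:F(x)<1\}$. *)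

From HB Require Import structures.
From mathcomp Require Import all_boot all_order all_algebra.
From mathcomp Require Import all_classical all_reals all_analysis.
Set Implicit Arguments. Unset Strict Implicit. Unset Printing Implicit Defensive.
Import Order.TTheory GRing.Theory Num.Theory.
Import numFieldNormedType.Exports.
Local Open Scope classical_set_scope.
Local Open Scope ring_scope.

Section defs.
Context {d : measure_display} {Omega : measurableType d} {R : realType}
  (P : probability Omega R).

Definition cdfR (X : {RV P >-> R}) (x : R) : R := fine (cdf X x).

Definition supp_l (X : {RV P >-> R}) : R := inf [set x | 0 < cdfR X x].
Definition supp_r (X : {RV P >-> R}) : R := sup [set x | cdfR X x < 1].

Definition CIGF (X : {RV P >-> R}) (alpha beta : nat) : \bar R :=
  (\int[lebesgue_measure]_(x in `](supp_l X), (supp_r X)[)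
     ((cdfR X x) ^+ alpha * (1 - cdfR X x) ^+ beta)%:E)%E.

(* Reliability of the k-out-of-n stress-strength system, strengths i.i.d.
   with CDF F = cdf of X, stress T:
   R_{k,n} = sum_{j=k}^n C(n,j) int [1-F(t)]^j [F(t)]^(n-j) dF_T(t),
   with R_{0,n} = 1. *)
Definition reliability (X T : {RV P >-> R}) (k n : nat) : \bar R :=
  if k == 0%N then 1%E else
  (\sum_(k <= j < n.+1)
     ('C(n, j))%:R%:E *
     \int[distribution P T]_t
        ((1 - cdfR X t) ^+ j * (cdfR X t) ^+ (n - j))%:E)%E.

End defs.

From HB Require Import structures.
From mathcomp Require Import all_boot all_order all_algebra.
From mathcomp Require Import all_classical all_reals all_analysis.
From mathcomp Require Import measurable_realfun.
Set Implicit Arguments. Unset Strict Implicit. Unset Printing Implicit Defensive.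
Import Order.TTheory GRing.Theory Num.Theory.
Import numFieldNormedType.Exports.
Local Open Scope classical_set_scope.
Local Open Scope ring_scope.

(* Since T is uniform on (l, r), integrating against its law is integrating
   over (l, r) against dx/(r - l), so the j-th term of R_{k,n} is exactly
   C(n,j) G_X(n-j, j)/(r - l).  The convention R_{0,n} = 1 fits the same
   formula: by the binomial theorem sum_j C(n,j) (1-F)^j F^(n-j) = 1, which
   integrates to the total mass 1 of the law of T. *)

Section lebesgue_measure_on_R.
Variable R : realType.

Let idR : measurableTypeR R -> R := id.

Let measurable_idR : measurable_fun setT idR.
Proof. by move=> _ A mA; rewrite setTI. Qed.

(* [lebesgue_measure] is defined on [measurableTypeR R], while real random
   variables take values in [R] with its own copy of the Borel sets; the
   identity between the two carries Lebesgue measure over. *)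
Definition lebesgueR : {measure set R -> \bar R}.
Proof. refine (pushforward lebesgue_measure idR); exact: measurable_idR. Defined.

Lemma ge0_integral_lebesgueR (D : set R) (f : R -> \bar R) :
  measurable D -> measurable_fun D f -> (forall x, D x -> (0 <= f x)%E) ->
  (\int[lebesgueR]_(x in D) f x = \int[lebesgue_measure]_(x in D) f x)%E.
Proof.
move=> mD mf f0.
apply: (ge0_integral_pushforward measurable_idR lebesgue_measure mD mf) => x.
by rewrite inE; exact: f0.
Qed.

Lemma ge0_integral_uniform (mu : {measure set R -> \bar R}) (l r : R)
    (f : R -> \bar R) :
  l <= r ->
  (forall A, measurable A ->
     mu A = (lebesgue_measure (A `&` `]l, r[) * ((r - l)^-1)%:E)%E) ->
  measurable_fun setT f -> (forall x, (0 <= f x)%E) ->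
  (\int[mu]_x f x =
     ((r - l)^-1)%:E * \int[lebesgue_measure]_(x in `]l, r[) f x)%E.
Proof.
move=> lr muE mf f0.
have c0 : 0 <= (r - l)^-1 by rewrite invr_ge0 subr_ge0.
have mfS A : measurable_fun A f := measurable_funS measurableT (subsetT A) mf.
set D : set R := `]l, r[%classic.
have mD : measurable D by exact: measurable_itv.
have mDC : measurable (~` D) by exact: measurableC.
have muDC : mu (~` D) = 0%E by rewrite muE // setICl measure0 mul0e.
rewrite -(setUv D) (ge0_integral_setU _ mD mDC) ?setUv //; last first.
  by rewrite /disj_set setICr.
rewrite (null_set_integral mDC (mfS _) muDC) adde0.
have -> : (\int[mu]_(x in D) f x = \int[mscale (NngNum c0) lebesgueR]_(x in D) f x)%E.
  apply: eq_measure_integral => A mA AD.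
  by rewrite muE // (setIidl AD) muleC.
by rewrite ge0_integral_mscale ?ge0_integral_lebesgueR // => x _; exact: f0.
Qed.

End lebesgue_measure_on_R.

Lemma sum_binomial_eq1 (R : comNzRingType) (n : nat) (x y : R) :
  x + y = 1 -> \sum_(j < n.+1) 'C(n, j)%:R * (x ^+ j * y ^+ (n - j)) = 1.
Proof.
move=> xy1; transitivity ((y + x) ^+ n); last by rewrite addrC xy1 expr1n.
by rewrite exprDn; apply: eq_bigr => j _; rewrite mulr_natl mulrC.
Qed.

Section cdfR.
Context {d : measure_display} {Omega : measurableType d} {R : realType}
  (P : probability Omega R) (X : {RV P >-> R}).

Lemma cdfR_ge0 x : 0 <= cdfR X x.
Proof. by rewrite fine_ge0 ?cdf_ge0. Qed.

Lemma cdfR_le1 x : cdfR X x <= 1.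
Proof. by rewrite -[1]/(fine 1%E) fine_le ?fin_num_measure ?cdf_le1. Qed.

Lemma measurable_cdfR : measurable_fun setT (cdfR X).
Proof.
apply: nondecreasing_measurable => // x y xy.
by rewrite fine_le ?fin_num_measure //; exact: cdf_nondecreasing.
Qed.

Lemma cdfR_weight_ge0 i j x : 0 <= (1 - cdfR X x) ^+ i * cdfR X x ^+ j.
Proof. by rewrite mulr_ge0 ?exprn_ge0 ?cdfR_ge0 // subr_ge0 cdfR_le1. Qed.

Lemma measurable_cdfR_weight i j :
  measurable_fun setT (fun x => (1 - cdfR X x) ^+ i * cdfR X x ^+ j).
Proof.
have mF := measurable_cdfR.
by apply: measurable_funM; apply: measurable_funX => //; exact: measurable_funB.
Qed.

Lemma CIGF_ge0 a b : (0 <= CIGF X a b)%E.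
Proof. by apply: integral_ge0 => x _; rewrite lee_fin mulrC cdfR_weight_ge0. Qed.

Variable T : {RV P >-> R}.

Lemma reliabilityE k n : reliability X T k n =
  (\sum_(k <= j < n.+1) ('C(n, j))%:R%:E *
     \int[distribution P T]_t ((1 - cdfR X t) ^+ j * cdfR X t ^+ (n - j))%:E)%E.
Proof.
rewrite /reliability; case: eqP => [-> | //].
have -> : ((\sum_(0 <= j < n.+1) ('C(n, j))%:R%:E *
     \int[distribution P T]_t ((1 - cdfR X t) ^+ j * cdfR X t ^+ (n - j))%:E) =
   \sum_(0 <= j < n.+1) \int[distribution P T]_t
     (('C(n, j))%:R * ((1 - cdfR X t) ^+ j * cdfR X t ^+ (n - j)))%:E)%E.
  apply: eq_bigr => j _; rewrite -ge0_integralZl_EFin //.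
  - by move=> t _; rewrite lee_fin cdfR_weight_ge0.
  - apply/measurable_EFinP; exact: measurable_cdfR_weight.
rewrite -ge0_integral_sum //; last 2 first.
- move=> j; apply/measurable_EFinP/measurable_funM; first exact: measurable_cst.
  exact: measurable_cdfR_weight.
- by move=> j t _; rewrite lee_fin mulr_ge0 ?cdfR_weight_ge0.
have binomial1 t : \sum_(j < n.+1)
    ('C(n, j))%:R * ((1 - cdfR X t) ^+ j * cdfR X t ^+ (n - j)) = 1.
  by rewrite sum_binomial_eq1 // subrK.
under eq_integral do rewrite sumEFin big_mkord binomial1.
by rewrite integral_cst // mul1e; exact/esym/(probability_setT (distribution P T)).
Qed.

Lemma integral_cdfR_weight_uniform i j :
  supp_l X <= supp_r X ->
  (forall A, measurable A ->
     distribution P T A =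
       (lebesgue_measure (A `&` `]supp_l X, supp_r X[) *
        ((supp_r X - supp_l X)^-1)%:E)%E) ->
  (\int[distribution P T]_t ((1 - cdfR X t) ^+ i * cdfR X t ^+ j)%:E =
     ((supp_r X - supp_l X)^-1)%:E * CIGF X j i)%E.
Proof.
move=> lr uniformT; rewrite (ge0_integral_uniform lr uniformT).
- by congr (_ * _)%E; apply: eq_integral => t _; rewrite mulrC.
- apply/measurable_EFinP; exact: measurable_cdfR_weight.
- by move=> t; rewrite lee_fin cdfR_weight_ge0.
Qed.

End cdfR.

Theorem proposition11 (d : measure_display) (Omega : measurableType d)
  (R : realType) (P : probability Omega R) (X T : {RV P >-> R}) (l r : R) :
  has_lbound [set x | 0 < cdfR X x] ->
  has_ubound [set x | cdfR X x < 1] ->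
  l = supp_l X -> r = supp_r X -> l < r ->
  (* T is uniformly distributed over (l, r) *)
  (forall A : set R, measurable A ->
     distribution P T A =
       (lebesgue_measure (A `&` `]l, r[) * ((r - l)^-1)%:E)%E) ->
  forall k n : nat, (k <= n)%N ->
  reliability X T k n =
    (((r - l)^-1)%:E *
      \sum_(k <= j < n.+1) ('C(n, j))%:R%:E * CIGF X (n - j) j)%E.
Proof.
move=> _ _ -> -> lr uniformT k n _.
rewrite reliabilityE ge0_sume_distrr; last first.
  by move=> j _; rewrite mule_ge0 ?lee_fin ?ler0n ?CIGF_ge0.
apply: eq_bigr => j _.
by rewrite (integral_cdfR_weight_uniform _ _ (ltW lr) uniformT) muleCA.
Qed.
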